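(* Let $p>3$ be a prime and $q>6p^4$ a prime. Let $G=\mathbb{Z}_6^5\times\mathbb{Z}_q$, $H=\mathbb{Z}_p^4$, let $A\subset G$ be the set defined in the context, and let $B\subset H$ be a spectral set with $|B|=2p$. Then for every map $t:A\to H$, the set $$P_t=\bigcup_{a\in A}\{a\}\times (t(a)+B)\subset G\times H$$ is not a tile in $G\times H$.
   Context: A subset $X$ of a finite abelian group $E$ is a tile if there is $\Lambda\subset E$ such that every element of $E$ is uniquely written as $x+\lambda$ with $x\in X$, $\lambda\in\Lambda$. $X$ is spectral if there is a set $S$ of characters of $E$ whose restrictions to $X$ form an orthogonal basis of $L^2(X)$ (equivalently $|S|=|X|$ and $\hat 1_X(s-s')=0$ for all distinct $s,s'\in S$, where $\hat f(\gamma)=\sum_{x\in E}f(x)\gamma(x)$). Construction of $A$: let $v=(1,2,3,4,5)\in\mathbb{Z}_6^5$; for a permutation $\pi\in S_5$ let $\pi(v)$ be the vector with permuted coordinates and $A_\pi=\{x\in\mathbb{Z}_6^5:\langle \pi(v),x\rangle\equiv 0 \pmod 6\}$ (a subgroup of order $6^4$). Enumerate $S_5$ as $\pi_0,\dots,\pi_{119}$. For $0\le k\le 119$ put $A_k=A_{\pi_k}\times\{k\}$, for $120\le k\le q-1$ put $A_k=A_{\pi_0}\times\{k\}$, and $A=\bigcup_{k=0}^{q-1}A_k\subset G$. *)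

From HB Require Import structures.
From mathcomp Require Import all_boot all_order all_algebra.
From mathcomp Require Import fingroup perm algC.
Set Implicit Arguments. Unset Strict Implicit. Unset Printing Implicit Defensive.
Import GRing.Theory Num.Theory.
Local Open Scope ring_scope.

HB.instance Definition _ (A B : finZmodType) := Finite.copy (A * B)%type (A * B)%type.

Definition is_char (E : finZmodType) (chi : E -> algC) : Prop :=
  chi 0 = 1 /\ forall x y : E, chi (x + y) = chi x * chi y.

(* X is spectral: there are |X| characters whose restrictions to X are
   pairwise orthogonal in L^2(X) (hence an orthogonal basis of L^2(X)). *)
Definition spectral (E : finZmodType) (X : {set E}) : Prop :=
  exists S : 'I_#|X| -> (E -> algC),
    (forall i, is_char (S i)) /\
    (forall i j, i != j -> \sum_(x in X) S i x * (S j x)^* = 0).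

Definition tile (E : finZmodType) (X : {set E}) : Prop :=
  exists L : {set E}, forall z : E,
    #|[set xl in setX X L | xl.1 + xl.2 == z]| = 1%N.

(* v = (1,2,3,4,5); pi(v) has coordinates (pi(v))_i = v_(pi i) *)
Definition Api (pi : {perm 'I_5}) : {set 'rV['Z_6]_5} :=
  [set x : 'rV['Z_6]_5 | \sum_(i < 5) ((pi i).+1)%:R * x ord0 i == 0].

Definition setA (q : nat) (enum : 'I_120 -> {perm 'I_5})
  : {set 'rV['Z_6]_5 * 'Z_q} :=
  [set g | let k := nat_of_ord g.2 in
           g.1 \in Api (if (k < 120)%N then enum (inord k) else enum ord0)].

Definition Pt (q p : nat) (enum : 'I_120 -> {perm 'I_5})
  (B : {set 'rV['Z_p]_4}) (t : 'rV['Z_6]_5 * 'Z_q -> 'rV['Z_p]_4)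
  : {set ('rV['Z_6]_5 * 'Z_q) * 'rV['Z_p]_4} :=
  [set z | (z.1 \in setA q enum) && (z.2 - t z.1 \in B)].

(* Counting, for a fixed g, the pairs (x, l) of the tiling with (x + l).1 = g
   in two ways gives |H| = |U| |B|, where U collects the pairs (a, l) with
   a in A and a + l.1 = g.  Hence |B| divides |H|; but 2p does not divide p^4. *)
From HB Require Import structures.
From mathcomp Require Import all_boot all_order all_algebra.
From mathcomp Require Import fingroup perm algC.
Import GRing.Theory Num.Theory.
Set Implicit Arguments. Unset Strict Implicit.
Local Open Scope ring_scope.

Section SkewProductTiles.

Variables G H : finZmodType.

Definition skew_setX (A : {set G}) (B : {set H}) (t : G -> H) : {set G * H} :=
  [set z | (z.1 \in A) && (z.2 - t z.1 \in B)].

Lemma tile_fiber_card (X L : {set G * H}) (g : G) :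
    (forall z, #|[set xl in setX X L | xl.1 + xl.2 == z]| = 1%N) ->
  #|[set xl in setX X L | (xl.1 + xl.2).1 == g]| = #|H|.
Proof.
move=> tileXL; rewrite -sum1_card (partition_big (fun xl => (xl.1 + xl.2).2) predT) //=.
rewrite -sum1_card; apply: eq_bigr => h _; rewrite sum1_card -(tileXL (g, h)).
have pairE (u : G * H) : ((u.1 == g) && (u.2 == h)) = (u == (g, h)) by case: u.
by apply: eq_card => xl; rewrite {1}unfold_in /= !inE -pairE !andbA.
Qed.

Lemma skew_fiber_card (A : {set G}) (B : {set H}) (t : G -> H) (L : {set G * H}) (g : G) :
  #|[set xl in setX (skew_setX A B t) L | (xl.1 + xl.2).1 == g]| =
  muln #|[set al in setX A L | al.1 + al.2.1 == g]| #|B|.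
Proof.
pose f (w : G * (G * H) * H) := ((w.1.1, w.2 + t w.1.1), w.1.2).
have f_inj : injective f.
  by move=> [[a l] b] [[a' l'] b'] [<- /addIr <- <-].
rewrite -cardsX -(card_imset _ f_inj); apply: eq_card => x; apply/idP/imsetP.
- rewrite !inE => /andP [/andP [/andP [xA xB] xL] xg].
  exists ((x.1.1, x.2), x.1.2 - t x.1.1); first by rewrite !inE /= xA xL xg xB.
  by rewrite /f /= subrK; case: x {xA xB xL xg} => [[]].
- move=> [[[a l] b]]; rewrite !inE /= => /andP [/andP [/andP [aA lL] ag] bB] ->.
  by rewrite /f /= addrK aA bB lL ag.
Qed.

Lemma skew_tile_card_dvd (A : {set G}) (B : {set H}) (t : G -> H) :
  tile (skew_setX A B t) -> (#|B| %| #|H|)%N.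
Proof.
move=> [L tileL]; rewrite -(tile_fiber_card 0 tileL) skew_fiber_card.
exact: dvdn_mull.
Qed.

End SkewProductTiles.

Theorem lemma3p2 (p q : nat) :
  prime p -> (3 < p)%N -> prime q -> (6 * p ^ 4 < q)%N ->
  forall enum : 'I_120 -> {perm 'I_5}, bijective enum ->
  forall B : {set 'rV['Z_p]_4}, spectral B -> #|B| = (2 * p)%N ->
  forall t : 'rV['Z_6]_5 * 'Z_q -> 'rV['Z_p]_4,
    ~ tile (Pt enum B t).
Proof.
move=> p_prime p_gt3 _ _ enum _ B _ cardB t /skew_tile_card_dvd.
rewrite cardB card_mx card_ord Zp_cast ?prime_gt1 // => /(dvdn_trans (dvdn_mulr p (dvdnn 2))).
rewrite Euclid_dvdX // => /andP [/(prime_nt_dvdP _ _) two_eq_p _].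
by move: p_gt3; rewrite -two_eq_p.
Qed.
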